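(* Let $G$ be a finite simple graph. Then for every simplex $\sigma$ of $\mathrm{M}(G)$ and every codimension-one face $\tau$ of $\sigma$ with $J(m_\tau)<J(m_\sigma)$ one has $J(m_\tau)=J(m_\sigma)-1$; thus $\partial_d$ has bidegree $(-1,-1)$ on $\widehat{C}(G)$. Moreover $\partial_d\circ\partial_d=0$, so $(\widehat{C}(G),\partial_d)$ is a chain complex.
   Context: A finite simple graph $G$ is regarded as a simplicial complex of dimension at most $1$; its face poset $\mathcal{F}(G)$ is the directed graph with vertices the vertices and edges of $G$ and a directed edge $e\to v$ whenever $v$ is an endpoint of the edge $e$. A matching on $\mathcal{F}(G)$ is a set $m$ of edges of $\mathcal{F}(G)$, no two sharing an endpoint. Given a matching $m$, let $\mathcal{F}_m(G)$ be obtained from $\mathcal{F}(G)$ by reversing every edge in $m$; a directed cycle of $\mathcal{F}_m(G)$ (closed directed path without repeated vertices) is supported by $m$, and $J(m)$ is the number of directed cycles supported by $m$. The matching complex $\mathrm{M}(G)$ has vertex set the edges of $\mathcal{F}(G)$ and simplices the nonempty matchings; $m_\sigma$ denotes the matching of a simplex $\sigma$. Let $\widehat{C}_i^j(G)$ be the $\mathbb{F}_2$-vector space with basis the $i$-dimensional simplices $\sigma$ of $\mathrm{M}(G)$ with $J(m_\sigma)=j$, and $\widehat{C}(G)=\bigoplus_{i,j}\widehat{C}_i^j(G)$. The simplicial boundary $\partial$ sends $\sigma$ to the mod-2 sum of its codimension-one faces. $\partial_J(\sigma)$ is the sum of those faces $\tau$ with $J(m_\tau)=J(m_\sigma)$,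 and $\partial_d=\partial-\partial_J$. *)

From mathcomp Require Import all_boot all_order all_algebra.
Set Implicit Arguments. Unset Strict Implicit. Unset Printing Implicit Defensive.
Import GRing.Theory.
Local Open Scope ring_scope.

Section FacePoset.
Variables (T : finType) (e : rel T).

Definition isEdge (s : {set T}) : bool :=
  [exists u, exists v, e u v && (s == [set u; v])].

(* vertices of the face poset F(G): vertices of G (inl) and edges of G (inr) *)
Definition node := (T + {set T})%type.

(* an edge s -> v of F(G) is represented by the pair (s, v), v an endpoint of s *)
Definition farc := ({set T} * T)%type.
Definition arc_ok (a : farc) : bool := isEdge a.1 && (a.2 \in a.1).

Definition matching (m : {set farc}) : bool :=
  [forall a in m, arc_ok a] &&
  [forall a in m, forall b in m, (a != b) ==> ((a.1 != b.1) && (a.2 != b.2))].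

Definition simplex (m : {set farc}) : bool := matching m && (m != set0).

(* directed edges of F_m(G): s -> v unless (s,v) in m, in which case v -> s *)
Definition dedge (m : {set farc}) (x y : node) : bool :=
  match x, y with
  | inr s, inl v => arc_ok (s, v) && ((s, v) \notin m)
  | inl v, inr s => arc_ok (s, v) && ((s, v) \in m)
  | _, _ => false
  end.

Definition joins (a : farc) (x y : node) : bool :=
  ((x == inr a.1) && (y == inl a.2)) || ((x == inl a.2) && (y == inr a.1)).

Definition cycle_arcs (p : seq node) : {set farc} :=
  [set a : farc | has (fun xy => joins a xy.1 xy.2) (zip p (rot 1 p))].

(* C is (the arc set of) a directed cycle supported by m: a closed directed
   path in F_m(G) without repeated vertices. *)
Definition is_dcycle (m : {set farc}) (C : {set farc}) : bool :=
  [exists n : 'I_(#|{: node}|.+1), exists t : n.-tuple node,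
     [&& (0 < n)%N, uniq t, cycle (dedge m) t & C == cycle_arcs t]].

Definition J (m : {set farc}) : nat := #|[set C : {set farc} | is_dcycle m C]|.

Definition codim1_face (tau sigma : {set farc}) : bool :=
  simplex sigma && simplex tau && [exists a in sigma, tau == sigma :\ a].

(* chains of \hat C(G): F_2-valued functions supported on simplices *)
Definition chain := {ffun {set farc} -> 'F_2}.
Definition is_chain (c : chain) : Prop := forall s, c s != 0 -> simplex s.

Definition bd_d (c : chain) : chain :=
  [ffun tau => \sum_(sigma | simplex sigma)
      c sigma * (codim1_face tau sigma && (J tau != J sigma))%:R].

End FacePoset.

From mathcomp Require Import all_boot all_order all_algebra.
Import GRing.Theory.
Local Open Scope ring_scope.
Set Implicit Arguments. Unset Strict Implicit. Unset Printing Implicit Defensive.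

(* In F_m(G) a vertex node has at
   most one outgoing arc (the reversed matched arc at it), and an edge node s
   lying on a directed cycle is entered from its matched endpoint, hence must
   leave through its other endpoint.  So successors along directed cycles are
   determined, and two directed cycles sharing an arc coincide.  Removing an arc
   a of m destroys exactly the cycles through a and creates none, whence
   J(m) = J(m \ a) + [a lies on a directed cycle of m]: J drops by at most one
   along a codimension-one face, which gives the first two claims.  For
   d_d o d_d = 0, the coefficient of rho in d_d (d_d sigma) counts the chains
   sigma > sigma \ a > rho = sigma \ {a, b} along which J drops twice; if such a
   chain exists then a and b lie on two distinct cycles of sigma, so removing
   them in the other order drops J twice as well, and these two chains are the
   only ones: the count is even. *)

Section CyclicPairs.
Variable X : eqType.

Definition cyc_pairs (t : seq X) : seq (X * X) := zip t (rot 1 t).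

Lemma path_rcons_zip (r : rel X) x p z :
  path r x (rcons p z) = all (fun xy => r xy.1 xy.2) (zip (x :: p) (rcons p z)).
Proof. by elim: p x => [|y p IH] x //=; rewrite IH. Qed.

Lemma cycle_cyc_pairs (r : rel X) t :
  cycle r t = all (fun xy => r xy.1 xy.2) (cyc_pairs t).
Proof. by case: t => [|x p] //=; rewrite /cyc_pairs rot1_cons path_rcons_zip. Qed.

Lemma cyc_pairs_fst t x y : (x, y) \in cyc_pairs t -> x \in t.
Proof.
move=> xy_t; have : x \in unzip1 (cyc_pairs t) by apply/mapP; exists (x, y).
by rewrite unzip1_zip // size_rot.
Qed.

Lemma cyc_pairs_snd t x y : (x, y) \in cyc_pairs t -> y \in t.
Proof.
move=> xy_t; have : y \in unzip2 (cyc_pairs t) by apply/mapP; exists (x, y).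
by rewrite unzip2_zip ?size_rot // mem_rot.
Qed.

Lemma cyc_pairs_pred t y : y \in t -> exists x, (x, y) \in cyc_pairs t.
Proof.
rewrite -(mem_rot 1) -{1}(@unzip2_zip _ _ t (rot 1 t)) ?size_rot //.
by case/mapP => [[x z] xz_t /= ->]; exists x.
Qed.

Lemma cyc_pairs_succ t x : x \in t -> exists y, (x, y) \in cyc_pairs t.
Proof.
rewrite -{1}(@unzip1_zip _ _ t (rot 1 t)) ?size_rot //.
by case/mapP => [[z y] zy_t /= ->]; exists y.
Qed.

Lemma path_implies (P : pred X) x s :
  path (fun x y => P x ==> P y) x s -> P x -> all P s.
Proof.
elim: s x => [|y s IH] x //= /andP[/implyP Pxy Ps] Px.
by rewrite Pxy //= (IH y Ps (Pxy Px)).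
Qed.

Lemma cyc_pairs_closed (P : pred X) t x0 : x0 \in t ->
  (forall x y, (x, y) \in cyc_pairs t -> P x -> P y) -> P x0 ->
  forall x, x \in t -> P x.
Proof.
move=> x0_t closedP Px0.
have Pcycle : cycle (fun x y => P x ==> P y) t.
  by rewrite cycle_cyc_pairs; apply/allP => [[x y]] /= /closedP Pxy; apply/implyP.
have [i s' t_rot] := rot_to x0_t.
rewrite -(rot_cycle i) t_rot /= in Pcycle.
have := path_implies Pcycle Px0; rewrite all_rcons => /andP[_ /allP Ps'] x.
by rewrite -(mem_rot i) t_rot inE => /orP[/eqP -> //|]; apply: Ps'.
Qed.

End CyclicPairs.

Section MatchingCycles.
Variables (T : finType) (e : rel T).
Local Notation node := (node T).
Local Notation farc := (farc T).

Lemma matchingP m : matching e m ->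
  (forall a, a \in m -> arc_ok e a) /\
  (forall a b, a \in m -> b \in m -> a != b -> (a.1 != b.1) && (a.2 != b.2)).
Proof.
case/andP=> /forall_inP ok_m /forall_inP disj_m; split=> // a b am bm.
exact: (implyP (forall_inP (disj_m a am) b bm)).
Qed.

Lemma matching_edge_inj m (a b : farc) :
  matching e m -> a \in m -> b \in m -> a.1 = b.1 -> a = b.
Proof.
move=> /matchingP[_ disj] am bm eq1; apply/eqP/negPn/negP.
by move=> /(disj _ _ am bm) /andP[]; rewrite eq1 eqxx.
Qed.

Lemma matching_vertex_inj m (a b : farc) :
  matching e m -> a \in m -> b \in m -> a.2 = b.2 -> a = b.
Proof.
move=> /matchingP[_ disj] am bm eq2; apply/eqP/negPn/negP.
by move=> /(disj _ _ am bm) /andP[_]; rewrite eq2 eqxx.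
Qed.

Lemma matching_subset (m m' : {set farc}) :
  m' \subset m -> matching e m -> matching e m'.
Proof.
move=> /subsetP sub /andP[/forall_inP ok_m /forall_inP disj_m]; apply/andP; split.
- by apply/forall_inP => a /sub; apply: ok_m.
- apply/forall_inP => a am'; apply/forall_inP => b bm'.
  exact: (forall_inP (disj_m a (sub _ am')) b (sub _ bm')).
Qed.

Lemma other_endpoint (p q u v v' : T) : v \in [set p; q] -> u \in [set p; q] ->
  v' \in [set p; q] -> v != u -> v' != u -> v = v'.
Proof.
by rewrite !in_set2; do 3!case/orP=> /eqP->; rewrite ?eqxx.
Qed.

Lemma dedge_cyc_pairs m t x y :
  cycle (dedge e m) t -> (x, y) \in cyc_pairs t -> dedge e m x y.
Proof. by rewrite cycle_cyc_pairs => /allP dt /dt. Qed.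

Lemma dcycle_succ_unique m (t1 t2 : seq node) x y y' : matching e m ->
  cycle (dedge e m) t1 -> cycle (dedge e m) t2 ->
  (x, y) \in cyc_pairs t1 -> (x, y') \in cyc_pairs t2 -> y = y'.
Proof.
move=> mm C1 C2 xy_t1 xy_t2.
have [w wx_t1] := cyc_pairs_pred (cyc_pairs_fst xy_t1).
have [w' wx_t2] := cyc_pairs_pred (cyc_pairs_fst xy_t2).
move: (dedge_cyc_pairs C1 xy_t1) (dedge_cyc_pairs C2 xy_t2).
move: (dedge_cyc_pairs C1 wx_t1) (dedge_cyc_pairs C2 wx_t2).
case: x {xy_t1 xy_t2 wx_t1 wx_t2} => [v|s].
- case: y => [?|s] //; case: y' => [?|s'] //= _ _ /andP[_ sv_m] /andP[_ s'v_m].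
  by have [->] := matching_vertex_inj mm sv_m s'v_m erefl.
- case: y => [v|?] //; case: y' => [v'|?] //.
  case: w => [u|?] //; case: w' => [u'|?] //=.
  move=> /andP[/andP[_ u_s] su_m] /andP[_ su'_m].
  move=> /andP[/andP[edge_s v_s] sv_nm] /andP[/andP[_ v'_s] sv'_nm].
  have [u_u'] := matching_edge_inj mm su_m su'_m erefl; subst u'.
  have v_u : v != u by apply: contraNneq sv_nm => ->.
  have v'_u : v' != u by apply: contraNneq sv'_nm => ->.
  case/existsP: edge_s => p /existsP[q /andP[_ /eqP s_pq]].
  rewrite /= in s_pq u_s v_s v'_s; rewrite {}s_pq in u_s v_s v'_s.
  by rewrite (other_endpoint v_s u_s v'_s v_u v'_u).
Qed.

Lemma joinsP (a : farc) (x y : node) : joins a x y ->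
  (x = inr a.1 /\ y = inl a.2) \/ (x = inl a.2 /\ y = inr a.1).
Proof. by case/orP => /andP[/eqP -> /eqP ->]; [left|right]. Qed.

Lemma cycle_arcsP (a : farc) (t : seq node) :
  a \in cycle_arcs t -> exists x y, (x, y) \in cyc_pairs t /\ joins a x y.
Proof. by rewrite inE => /hasP[[x y] xy_t ja]; exists x, y. Qed.

Lemma cycle_arcs_vertex (a : farc) (t : seq node) :
  a \in cycle_arcs t -> (inl a.2 : node) \in t.
Proof.
case/cycle_arcsP => x [y [xy_t /joinsP [[_ y_a]|[x_a _]]]]; subst.
- exact: cyc_pairs_snd xy_t.
- exact: cyc_pairs_fst xy_t.
Qed.

Lemma cycle_arcs_subset m (t1 t2 : seq node) a : matching e m ->
  cycle (dedge e m) t1 -> cycle (dedge e m) t2 ->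
  a \in cycle_arcs t1 -> a \in cycle_arcs t2 -> cycle_arcs t1 \subset cycle_arcs t2.
Proof.
move=> mm C1 C2 a_t1 a_t2.
have t1_t2 : forall x, x \in t1 -> x \in t2.
  apply: (cyc_pairs_closed (P := mem t2) (cycle_arcs_vertex a_t1)).
    move=> x y xy_t1 x_t2; have [y' xy'_t2] := cyc_pairs_succ x_t2.
    by rewrite (dcycle_succ_unique mm C1 C2 xy_t1 xy'_t2); apply: cyc_pairs_snd xy'_t2.
  exact: cycle_arcs_vertex a_t2.
apply/subsetP => b /cycle_arcsP [x [y [xy_t1 jb]]].
have [y' xy'_t2] := cyc_pairs_succ (t1_t2 _ (cyc_pairs_fst xy_t1)).
rewrite (dcycle_succ_unique mm C1 C2 xy_t1 xy'_t2) in jb.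
by rewrite inE; apply/hasP; exists (x, y').
Qed.

Lemma is_dcycleP m C : is_dcycle e m C ->
  exists2 t : seq node, cycle (dedge e m) t & C = cycle_arcs t.
Proof. by case/existsP => n /existsP [t /and4P [_ _ Ct /eqP ->]]; exists t. Qed.

Lemma dcycle_through_arc m C1 C2 a : matching e m ->
  is_dcycle e m C1 -> is_dcycle e m C2 -> a \in C1 -> a \in C2 -> C1 = C2.
Proof.
move=> mm /is_dcycleP[t1 C1t ->] /is_dcycleP[t2 C2t ->] a_t1 a_t2.
apply/eqP; rewrite eqEsubset.
by rewrite (cycle_arcs_subset mm C1t C2t a_t1 a_t2) (cycle_arcs_subset mm C2t C1t a_t2 a_t1).
Qed.

(* Un-reversing the matched arc a: the cyclic sequences that are directed
   cycles for m \ a are those of m avoiding a. *)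
Lemma cycle_delete_arc m (a : farc) (t : seq node) : matching e m -> a \in m ->
  cycle (dedge e (m :\ a)) t = cycle (dedge e m) t && (a \notin cycle_arcs t).
Proof.
move=> mm am; apply/idP/idP.
- move=> C; suff pairs_ok : forall x y, (x, y) \in cyc_pairs t ->
      dedge e m x y && ~~ joins a x y.
    rewrite cycle_cyc_pairs inE; apply/andP; split.
      by apply/allP => -[x y] /pairs_ok /andP[].
    by apply/hasPn => -[x y] /pairs_ok /andP[].
  move=> x y xy_t; move: (dedge_cyc_pairs C xy_t).
  case: x y xy_t => [v|s] [v'|s'] xy_t //=.
  + rewrite in_setD1 => /andP[ok /andP[sv_a sv_m]]; rewrite ok sv_m /=.
    apply/negP => /joinsP [[]|[[v_a] [s_a]]] //.
    by move: sv_a; rewrite s_a v_a -surjective_pairing eqxx.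
  + move=> /andP[ok sv_nm].
    have [w wx_t] := cyc_pairs_pred (cyc_pairs_fst xy_t).
    case: w wx_t (dedge_cyc_pairs C wx_t) => [u|?] wx_t //= /andP[_].
    rewrite in_setD1 => /andP[su_a su_m].
    have sv'_nm : (s, v') \notin m.
      apply/negP => sv'_m; move: sv_nm; rewrite in_setD1 sv'_m andbT negbK.
      move=> /eqP a_sv; have su_eq_a : (s, u) = a.
        by apply: (matching_edge_inj mm su_m am); rewrite -a_sv.
      by rewrite su_eq_a eqxx in su_a.
    rewrite ok sv'_nm /=; apply/negP => /joinsP [[[s_a] [v_a]]|[]] //.
    by move: sv'_nm; rewrite s_a v_a -surjective_pairing am.
- case/andP => C; rewrite inE => /hasPn avoid.
  rewrite cycle_cyc_pairs; apply/allP => -[x y] xy_t /=.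
  move: (dedge_cyc_pairs C xy_t) (avoid _ xy_t).
  case: x y {xy_t} => [v|s] [v'|s'] //=.
  + move=> /andP[ok sv_m] ja; rewrite ok in_setD1 sv_m andbT /=.
    by apply: contra ja => /eqP a_sv; rewrite -a_sv /joins /= !eqxx.
  + by move=> /andP[ok sv_nm] _; rewrite ok in_setD1 (negbTE sv_nm) andbF.
Qed.

Lemma dcycle_delete_arc m (a : farc) C : matching e m -> a \in m ->
  is_dcycle e (m :\ a) C = is_dcycle e m C && (a \notin C).
Proof.
move=> mm am; apply/idP/idP.
- case/existsP => n /existsP [t /and4P [n_gt0 t_uniq]].
  rewrite (cycle_delete_arc _ mm am) => /andP[Ct a_nt] /eqP C_t.
  rewrite C_t a_nt andbT; apply/existsP; exists n; apply/existsP; exists t.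
  by rewrite n_gt0 t_uniq Ct eqxx.
- case/andP => /existsP [n /existsP [t /and4P [n_gt0 t_uniq Ct /eqP C_t]]] a_nC.
  apply/existsP; exists n; apply/existsP; exists t.
  by rewrite n_gt0 t_uniq (cycle_delete_arc _ mm am) Ct -C_t a_nC C_t eqxx.
Qed.

Definition on_dcycle m (a : farc) := [exists C, is_dcycle e m C && (a \in C)].

Lemma J_delete_arc m (a : farc) : matching e m -> a \in m ->
  J e m = (J e (m :\ a) + on_dcycle m a)%N.
Proof.
move=> mm am; rewrite /J -(cardsID [set C : {set farc} | a \in C]) addnC.
congr (_ + _)%N.
  by apply: eq_card => C; rewrite !inE (dcycle_delete_arc _ mm am) andbC.
case: (boolP (on_dcycle m a)) => [/existsP [C0 /andP [C0_cyc a_C0]]|no_cyc].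
- suff -> : [set C : {set farc} | is_dcycle e m C] :&: [set C : {set farc} | a \in C] = [set C0].
    by rewrite cards1.
  apply/setP => C; rewrite !inE; apply/andP/eqP => [[C_cyc a_C]|->]; last by [].
  exact: dcycle_through_arc mm C_cyc C0_cyc a_C a_C0.
- suff -> : [set C : {set farc} | is_dcycle e m C] :&: [set C : {set farc} | a \in C] = set0.
    by rewrite cards0.
  apply/setP => C; rewrite !inE.
  by move/existsPn: no_cyc => /(_ C) /negbTE ->.
Qed.

Lemma J_codim1_face tau sigma : codim1_face e tau sigma ->
  J e sigma = J e tau \/ J e sigma = (J e tau).+1.
Proof.
case/andP => /andP[/andP[sigma_m _] _] /exists_inP[a a_sigma /eqP ->].
rewrite (J_delete_arc sigma_m a_sigma).
by case: (on_dcycle sigma a); [right; rewrite addn1 | left; rewrite addn0].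
Qed.

(* If b lies on a cycle of m \ a and a on a cycle of m, then a and b lie on
   distinct cycles of m, so b lies on a cycle of m and a on one of m \ b. *)
Lemma on_dcycle_exchange m (a b : farc) : matching e m -> a \in m -> b \in m :\ a ->
  on_dcycle m a -> on_dcycle (m :\ a) b -> on_dcycle m b && on_dcycle (m :\ b) a.
Proof.
move=> mm am b_ma /existsP [Ca /andP [Ca_cyc a_Ca]] /existsP [Cb /andP [Cb_cyc b_Cb]].
have bm : b \in m by move: b_ma; rewrite in_setD1 => /andP[].
rewrite (dcycle_delete_arc _ mm am) in Cb_cyc; case/andP: Cb_cyc => Cb_cyc a_nCb.
apply/andP; split; apply/existsP.
- by exists Cb; rewrite Cb_cyc b_Cb.
- exists Ca; rewrite a_Ca andbT (dcycle_delete_arc _ mm bm) Ca_cyc /=.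
  apply: contra a_nCb => b_Ca.
  by rewrite -(dcycle_through_arc mm Ca_cyc Cb_cyc b_Ca b_Cb).
Qed.

End MatchingCycles.

Section DropFaces.
Variables (T : finType) (e : rel T).
Local Notation farc := (farc T).

Definition drop_face (tau sigma : {set farc}) :=
  codim1_face e tau sigma && (J e tau != J e sigma).

Lemma drop_faceP tau sigma : drop_face tau sigma ->
  exists2 a, a \in sigma &
    [/\ tau = sigma :\ a, on_dcycle e sigma a, simplex e sigma & simplex e tau].
Proof.
case/andP => /andP[/andP[sigma_s tau_s] /exists_inP [a a_sigma /eqP tau_def]] J_ne.
exists a => //; have sigma_m : matching e sigma by case/andP: sigma_s.
split => //; move: J_ne; rewrite (J_delete_arc sigma_m a_sigma) tau_def.
by case: (on_dcycle e sigma a); rewrite ?addn0 ?eqxx.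
Qed.

Lemma drop_face_intro sigma a : simplex e sigma -> a \in sigma ->
  on_dcycle e sigma a -> sigma :\ a != set0 -> drop_face (sigma :\ a) sigma.
Proof.
move=> sigma_s a_sigma a_cyc nonempty; have sigma_m : matching e sigma by case/andP: sigma_s.
rewrite /drop_face /codim1_face sigma_s /simplex nonempty.
rewrite (matching_subset (subsetDl _ _) sigma_m) (J_delete_arc sigma_m a_sigma) a_cyc.
by rewrite addn1 neq_ltn ltnSn /= ?andbT; apply/exists_inP; exists a.
Qed.

Lemma drop_face_diamond sigma tau1 rho :
  drop_face tau1 sigma -> drop_face rho tau1 ->
  exists tau2, [/\ tau2 != tau1, drop_face tau2 sigma, drop_face rho tau2 &
    forall tau, drop_face tau sigma -> drop_face rho tau -> tau = tau1 \/ tau = tau2].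
Proof.
move=> drop1 drop2.
have [a a_sigma [tau1_def a_cyc sigma_s _]] := drop_faceP drop1.
have [b b_tau1 [rho_def b_cyc _ rho_s]] := drop_faceP drop2.
have sigma_m : matching e sigma by case/andP: sigma_s.
rewrite tau1_def in b_tau1 b_cyc rho_def.
have /andP[b_cyc' a_cyc'] := on_dcycle_exchange sigma_m a_sigma b_tau1 a_cyc b_cyc.
move: b_tau1; rewrite in_setD1 => /andP[b_a b_sigma].
have a_tau2 : a \in sigma :\ b by rewrite in_setD1 eq_sym b_a.
have tau2_ne : sigma :\ b != set0 by apply/set0Pn; exists a.
have rho_def' : rho = (sigma :\ b) :\ a by rewrite rho_def; apply/setP => x; rewrite !inE andbCA.
exists (sigma :\ b); split.
- by apply: contraTneq a_tau2 => ->; rewrite tau1_def !inE eqxx.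
- exact: drop_face_intro.
- rewrite rho_def'; apply: drop_face_intro => //; last by rewrite -rho_def'; case/andP: rho_s.
  by rewrite /simplex tau2_ne (matching_subset (subsetDl _ _) sigma_m).
- move=> tau /drop_faceP[c c_sigma [-> _ _ _]] /drop_faceP[d _ [rho_tau _ _ _]].
  have : c \notin rho by rewrite rho_tau !inE eqxx andbF.
  rewrite rho_def !inE c_sigma andbT negb_and !negbK tau1_def.
  by case/orP => /eqP ->; [right|left].
Qed.

Lemma drop_face_chains_even sigma rho :
  \sum_(tau | simplex e tau) (drop_face tau sigma)%:R * (drop_face rho tau)%:R
    = 0 :> 'F_2.
Proof.
under eq_bigr => tau _ do rewrite -natrM mulnb.
case: (boolP [exists tau, drop_face tau sigma && drop_face rho tau]).
- case/existsP => tau1 /andP[drop1 drop2].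
  have [tau2 [tau2_tau1 drop3 drop4 only_two]] := drop_face_diamond drop1 drop2.
  have [_ _ [_ _ _ tau1_s]] := drop_faceP drop1.
  have [_ _ [_ _ _ tau2_s]] := drop_faceP drop3.
  rewrite (bigD1 tau1) // (bigD1 tau2) /=; last by rewrite tau2_s tau2_tau1.
  rewrite drop1 drop2 drop3 drop4 big1 ?addr0; first by apply/eqP.
  move=> tau /andP[/andP[_ ne1] ne2].
  suff -> : drop_face tau sigma && drop_face rho tau = false by [].
  apply/negP => /andP[d1 d2].
  by case: (only_two tau d1 d2) => eq; [move: ne1 | move: ne2]; rewrite eq eqxx.
- move/existsPn => none; apply: big1 => tau _.
  by rewrite (negbTE (none tau)).
Qed.

Lemma bd_d_support (c : chain T) tau : bd_d e c tau != 0 ->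
  exists2 sigma, c sigma != 0 & drop_face tau sigma.
Proof.
rewrite ffunE => nz; apply/exists_inP; apply: contraNT nz => /exists_inPn none.
apply/eqP; apply: big1 => sigma _.
case: (boolP (c sigma == 0)) => [/eqP -> | c_nz]; first by rewrite mul0r.
by move: (none _ c_nz); rewrite /drop_face => /negbTE ->; rewrite mulr0.
Qed.

Lemma bd_d_square_zero (c : chain T) : bd_d e (bd_d e c) = 0.
Proof.
apply/ffunP => rho; rewrite !ffunE.
under eq_bigr => tau _ do rewrite ffunE big_distrl /=.
rewrite exchange_big /= big1 // => sigma _.
rewrite (eq_bigr (fun tau => c sigma * ((drop_face tau sigma)%:R * (drop_face rho tau)%:R))).
  by rewrite -big_distrr /= drop_face_chains_even mulr0.
by move=> tau _; rewrite mulrA.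
Qed.

End DropFaces.

Theorem mainTheorem6 (T : finType) (e : rel T)
    (e_sym : symmetric e) (e_irr : irreflexive e) :
  (* J drops by exactly one when it drops on a codimension-one face *)
  (forall sigma tau : {set farc T}, codim1_face e tau sigma ->
     (J e tau < J e sigma)%N -> J e tau = (J e sigma).-1)
  /\
  (* hence partial_d has bidegree (-1,-1): a chain concentrated in
     \hat C_i^j is sent into \hat C_{i-1}^{j-1} *)
  (forall (i j : nat) (c : chain T),
     is_chain e c ->
     (forall s, c s != 0 -> #|s| = i.+1 /\ J e s = j) ->
     forall tau, bd_d e c tau != 0 -> #|tau| = i /\ (J e tau).+1 = j)
  /\
  (* partial_d o partial_d = 0 *)
  (forall c : chain T, is_chain e c -> bd_d e (bd_d e c) = 0).
Proof.
split; [|split].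
- move=> sigma tau /J_codim1_face[-> | ->] J_lt //.
  by rewrite ltnn in J_lt.
- move=> i j c _ c_deg tau /bd_d_support[sigma c_nz drop].
  have [card_sigma <-] := c_deg sigma c_nz.
  have [a a_sigma [tau_def _ _ _]] := drop_faceP drop.
  split; first by move: card_sigma; rewrite (cardsD1 a) a_sigma -tau_def => -[].
  case/andP: drop => face J_ne.
  by case: (J_codim1_face face) J_ne => ->; rewrite ?eqxx.
- by move=> c _; apply: bd_d_square_zero.
Qed.
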